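(* Assume $\mathbf a,\mathbf b\in\Delta^n$ with strictly positive entries, and let $\eta>0$. Let $(\mathbf u^*,\mathbf v^* )$ be the $(\mathbf u,\mathbf v)$-part of an optimal solution of the dual problem $\max_{(\mathbf u,\mathbf v,\mathbf t)\in\mathcal X}\{-\frac{1}{4\eta}\sum_{ij}t_{ij}^2-\tau\langle e^{-\mathbf u/\tau},\mathbf a\rangle-\tau\langle e^{-\mathbf v/\tau},\mathbf b\rangle+\mathbf a^\top\mathbf 1_n+\mathbf b^\top\mathbf 1_n\}$, $\mathcal X=\{(\mathbf u,\mathbf v,\mathbf t):t_{ij}\ge0,\ t_{ij}\ge u_i+v_j-C_{ij}\}$. Then for all $i,j\in[n]$, $u^*_i\le\|C\|_\infty+2\eta$ and $v^*_j\le\|C\|_\infty+2\eta$.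
   Context: Let $n\ge1$, $C\in\mathbb{R}^{n\times n}$ with nonnegative entries and $\|C\|_\infty=\max_{i,j}|C_{ij}|$; $\tau>0$; $\Delta^n=\{\mathbf x\in\mathbb{R}^n_+:\sum_i x_i=1\}$. $e^{-\mathbf u/\tau}$ is the entrywise exponential and $\mathbf 1_n$ the all-ones vector. *)

From HB Require Import structures.
From mathcomp Require Import all_boot all_order all_algebra.
From mathcomp Require Import all_classical all_reals all_analysis.
Set Implicit Arguments. Unset Strict Implicit. Unset Printing Implicit Defensive.
Import Order.TTheory GRing.Theory Num.Theory.
Local Open Scope ring_scope.

Section Defs.
Variables (R : realType) (n : nat).

Definition in_simplex (x : 'I_n -> R) : Prop :=
  (forall i, 0 <= x i) /\ \sum_(i < n) x i = 1.

Definition mx_supnorm (C : 'M[R]_n) : R :=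
  \big[Num.max/0]_(i < n) \big[Num.max/0]_(j < n) `|C i j|.

Definition dual_feasible (C : 'M[R]_n) (u v : 'I_n -> R) (t : 'M[R]_n) : Prop :=
  forall i j, 0 <= t i j /\ u i + v j - C i j <= t i j.

Definition dual_obj (eta tau : R) (a b : 'I_n -> R)
    (u v : 'I_n -> R) (t : 'M[R]_n) : R :=
  - (4 * eta)^-1 * (\sum_(i < n) \sum_(j < n) t i j ^+ 2)
  - tau * (\sum_(i < n) expR (- u i / tau) * a i)
  - tau * (\sum_(j < n) expR (- v j / tau) * b j)
  + \sum_(i < n) a i + \sum_(j < n) b j.

Definition dual_optimal (C : 'M[R]_n) (eta tau : R) (a b : 'I_n -> R)
    (u v : 'I_n -> R) (t : 'M[R]_n) : Prop :=
  dual_feasible C u v t /\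
  forall u' v' t', dual_feasible C u' v' t' ->
    dual_obj eta tau a b u' v' t' <= dual_obj eta tau a b u v t.

End Defs.

From HB Require Import structures.
From mathcomp Require Import all_boot all_order all_algebra.
From mathcomp Require Import all_classical all_reals all_analysis.
From mathcomp Require Import ring lra.
Set Implicit Arguments. Unset Strict Implicit. Unset Printing Implicit Defensive.
Import Order.TTheory GRing.Theory Num.Theory.
Local Open Scope ring_scope.

(* Every bound comes from an improving move that would contradict optimality.
   If all v_j < 0, raising a negative u_k to 0 is improving, so u >= 0; then
   shifting u down and v up by half of -max v is improving, so some v_j0 >= 0.
   Finally, if u_i > ||C|| + 2 eta, lowering u_i to ||C|| + 2 eta (and row i of
   t accordingly) costs at most u_i - ||C|| - 2 eta in the exponential term,
   because exp(-x/tau) is (1/tau)-Lipschitz on [0, oo) and a_i <= 1, while the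
   entry t_{i j0} alone gives back strictly more in the quadratic term.  The
   bound on v follows by transposing the problem. *)

Lemma expR_divN_sub_le (R : realType) (tau x y : R) :
  0 < tau -> 0 <= y -> y <= x ->
  tau * (expR (- y / tau) - expR (- x / tau)) <= x - y.
Proof.
move=> tau_gt0 y_ge0 le_yx.
have -> : expR (- x / tau) = expR (- y / tau) * expR (- ((x - y) / tau)).
  by rewrite -expRD; congr expR; field; rewrite gt_eqF.
have ey_le1 : expR (- y / tau) <= 1.
  by rewrite -expR0 ler_expR mulNr oppr_le0 divr_ge0 // ltW.
have dxy_ge0 : 0 <= (x - y) / tau by rewrite divr_ge0 ?subr_ge0 // ltW.
have chord : 1 - (x - y) / tau <= expR (- ((x - y) / tau)) by exact: expR_ge1Dx.
have tau_dxy : tau * ((x - y) / tau) = x - y by field; rewrite gt_eqF.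
rewrite -[X in _ <= X]tau_dxy ler_pM2l //.
have ey_gt0 := expR_gt0 (- y / tau).
have : expR (- y / tau) * (1 - (x - y) / tau)
         <= expR (- y / tau) * expR (- ((x - y) / tau)) by rewrite ler_pM2l.
nra.
Qed.

Lemma simplex_le1 (R : realType) (n : nat) (w : 'I_n -> R) k :
  in_simplex w -> w k <= 1.
Proof. by move=> [w_ge0 <-]; rewrite (bigD1 k) //= lerDl sumr_ge0. Qed.

Definition expsum (R : realType) (n : nat) (tau : R) (w x : 'I_n -> R) : R :=
  \sum_(i < n) expR (- x i / tau) * w i.

Definition sqsum (R : realType) (n : nat) (t : 'M[R]_n) : R :=
  \sum_(i < n) \sum_(j < n) t i j ^+ 2.

Section ExpSumSqSum.
Variables (R : realType) (n : nat) (tau : R).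

Lemma expsum_set (w x : 'I_n -> R) k y :
  expsum tau w x - expsum tau w (fun i => if i == k then y else x i)
  = (expR (- x k / tau) - expR (- y / tau)) * w k.
Proof.
rewrite /expsum (bigD1 k) //= [X in _ - X](bigD1 k) //= eqxx.
rewrite [X in _ - (_ + X)](eq_bigr (fun i => expR (- x i / tau) * w i)).
  by ring.
by move=> i /negbTE ->.
Qed.

Lemma expsum_shift (w x : 'I_n -> R) c :
  expsum tau w (fun i => x i + c) = expR (- c / tau) * expsum tau w x.
Proof.
rewrite /expsum mulr_sumr; apply: eq_bigr => i _.
by rewrite mulrA -expRD; congr (expR _ * _); rewrite -mulrDl opprD addrC.
Qed.

Lemma sqsum_sub_ge (s t : 'M[R]_n) i j :
  (forall k l, s k l ^+ 2 <= t k l ^+ 2) ->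
  t i j ^+ 2 - s i j ^+ 2 <= sqsum t - sqsum s.
Proof.
move=> le_st; rewrite /sqsum -sumrB (bigD1 i) //= -sumrB (bigD1 j) //=.
rewrite -addrA lerDl addr_ge0 ?sumr_ge0 // => [l _|k _].
  by rewrite subr_ge0.
by rewrite -sumrB sumr_ge0 // => l _; rewrite subr_ge0.
Qed.

Lemma sqsum_trmx (t : 'M[R]_n) : sqsum t^T = sqsum t.
Proof.
by rewrite /sqsum exchange_big; apply: eq_bigr => i _; apply: eq_bigr => j _; rewrite mxE.
Qed.

End ExpSumSqSum.

Section DualOptimal.
Variables (R : realType) (n : nat) (C : 'M[R]_n) (eta tau : R) (a b : 'I_n -> R).
Hypothesis tau_gt0 : 0 < tau.

Lemma dual_objE u v t :
  dual_obj eta tau a b u v t =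
  - (4 * eta)^-1 * sqsum t - tau * expsum tau a u - tau * expsum tau b v
  + \sum_(i < n) a i + \sum_(j < n) b j.
Proof. by []. Qed.

Lemma dual_optimal_gain_le0 u v t u' v' t' :
  dual_optimal C eta tau a b u v t -> dual_feasible C u' v' t' ->
  (4 * eta)^-1 * (sqsum t - sqsum t') + tau * (expsum tau a u - expsum tau a u')
  + tau * (expsum tau b v - expsum tau b v') <= 0.
Proof.
move=> [_ opt] feas'; have := opt _ _ _ feas'; rewrite !dual_objE.
rewrite !mulrBr; lra.
Qed.

Lemma u_ge0_of_v_lt0 u v t :
  (forall i j, 0 <= C i j) -> (forall i, 0 < a i) ->
  dual_optimal C eta tau a b u v t ->
  (forall j, v j < 0) -> forall k, 0 <= u k.
Proof.
move=> C_ge0 a_gt0 opt v_lt0 k; rewrite leNgt; apply/negP => uk_lt0.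
pose u' i := if i == k then 0 else u i.
have feas' : dual_feasible C u' v t.
  move=> i j; have [t_ge0 t_ge] := opt.1 i j; split => //; rewrite /u'.
  by case: eqP => _ //; have := v_lt0 j; have := C_ge0 i j; lra.
have := dual_optimal_gain_le0 opt feas'; rewrite expsum_set !subrr !mulr0 add0r addr0.
rewrite oppr0 mul0r expR0; apply/negP; rewrite -ltNge.
rewrite pmulr_rgt0 // pmulr_lgt0 // subr_gt0 -expR0 ltr_expR.
by rewrite mulNr oppr_gt0 pmulr_llt0 ?invr_gt0.
Qed.

Lemma exists_v_ge0 u v t :
  (0 < n)%N -> (forall i j, 0 <= C i j) ->
  in_simplex a -> in_simplex b -> (forall i, 0 < a i) ->
  dual_optimal C eta tau a b u v t -> exists j, 0 <= v j.
Proof.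
move=> n_gt0 C_ge0 [a_ge0 a_sum1] [b_ge0 b_sum1] a_gt0 opt.
have [[j vj_ge0]|v_lt0] := pselect (exists j, 0 <= v j); first by exists j.
have {}v_lt0 j : v j < 0 by rewrite ltNge; apply/negP => ?; apply: v_lt0; exists j.
have u_ge0 := u_ge0_of_v_lt0 C_ge0 a_gt0 opt v_lt0.
have [jm _ v_le_vjm] := @arg_maxP _ R 'I_n (Ordinal n_gt0) xpredT v isT.
pose c := - v jm / 2.
have c_gt0 : 0 < c by rewrite divr_gt0 // oppr_gt0.
have cc : c + c = - v jm by rewrite /c; field.
have feas' : dual_feasible C (fun i => u i + - c) (fun j => v j + c) t.
  by move=> i j; have [t_ge0 t_ge] := opt.1 i j; split => //; lra.
have := dual_optimal_gain_le0 opt feas'; rewrite !expsum_shift opprK.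
set x := expR (c / tau); set y := expR (- c / tau).
set A := expsum tau a u; set B := expsum tau b v.
have x_gt1 : 1 < x by rewrite -expR0 ltr_expR divr_gt0.
have xy1 : x * y = 1 by rewrite -expRD mulNr addrN expR0.
have A_le1 : A <= 1.
  rewrite -a_sum1; apply: ler_sum => i _.
  by rewrite ler_piMl ?a_ge0 // -expR0 ler_expR mulNr oppr_le0 divr_ge0 // ltW.
have A_ge0 : 0 <= A.
  by rewrite sumr_ge0 // => i _; rewrite mulr_ge0 ?a_ge0 // ltW ?expR_gt0.
have B_ge : x * x <= B.
  rewrite -[x * x]mulr1 -b_sum1 mulr_sumr; apply: ler_sum => j _.
  rewrite ler_wpM2r ?b_ge0 // -expRD ler_expR -mulrDl ler_pM2r ?invr_gt0 //.
  by have /= := v_le_vjm j isT; lra.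
have y_lt1 : y < 1 by rewrite -expR0 ltr_expR mulNr oppr_lt0 divr_gt0.
have yB_ge : (1 - y) * (x * x) <= (1 - y) * B by rewrite ler_wpM2l // subr_ge0 ltW.
have xA_ge : (x - 1) * A <= x - 1 by rewrite ler_piMr // subr_ge0 ltW.
have yxx : (1 - y) * (x * x) = x * x - x by rewrite mulrBl mul1r mulrA [y * x]mulrC xy1 mul1r.
have x_sq : 0 < (x - 1) * (x - 1) by rewrite mulr_gt0 // subr_gt0.
rewrite subrr mulr0 add0r -mulrDr => gain_le0; exfalso; move: gain_le0.
by apply/negP; rewrite -ltNge pmulr_rgt0 //; lra.
Qed.

Lemma u_le_bound M u v t j0 :
  (forall i j, C i j <= M) -> 0 <= M -> 0 < eta ->
  in_simplex a -> (forall i, 0 < a i) ->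
  dual_optimal C eta tau a b u v t -> 0 <= v j0 ->
  forall i, u i <= M + 2 * eta.
Proof.
move=> C_le M_ge0 eta_gt0 a_simplex a_gt0 opt vj0_ge0 i.
set m := M + 2 * eta; rewrite leNgt; apply/negP => ui_gt.
set d := u i - m.
pose u' k := if k == i then m else u k.
pose t' := \matrix_(k, j) if k == i then Num.max 0 (m + v j - C i j) else t k j.
have feas' : dual_feasible C u' v t'.
  move=> k j; rewrite /u' mxE; case: eqP => [->|_]; last exact: opt.1.
  by rewrite !le_max !lexx orbT.
have t'_sq_le k j : t' k j ^+ 2 <= t k j ^+ 2.
  rewrite mxE; case: eqP => [->|_] //; have [t_ge0 t_ge] := opt.1 i j.
  have mx_ge0 : 0 <= Num.max 0 (m + v j - C i j) by rewrite le_max lexx.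
  have mx_le : Num.max 0 (m + v j - C i j) <= t i j by rewrite ge_max t_ge0; lra.
  by rewrite ler_sqr ?nnegrE.
have sq_gain : 4 * eta * d < t i j0 ^+ 2 - t' i j0 ^+ 2.
  have [_ t_ge] := opt.1 i j0; have := C_le i j0.
  rewrite mxE eqxx; set s := m + v j0 - C i j0 => C_le_M.
  have s_ge : 2 * eta <= s by rewrite /s /m; lra.
  have d_gt0 : 0 < d by rewrite /d subr_gt0.
  have t_ge_sd : s + d <= t i j0 by rewrite /s /d; lra.
  rewrite max_r; last by lra.
  have : 0 <= (t i j0 - (s + d)) * (t i j0 + (s + d)) by apply: mulr_ge0; lra.
  have : 0 <= d * (s - 2 * eta) by apply: mulr_ge0; lra.
  nra.
have exp_loss : - d <= tau * (expsum tau a u - expsum tau a u').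
  have m_ge0 : 0 <= m by rewrite /m; lra.
  have := expR_divN_sub_le tau_gt0 m_ge0 (ltW ui_gt); rewrite -/d.
  rewrite expsum_set; set P := tau * (_ - _) => lip.
  rewrite (_ : tau * _ = - (P * a i)); last by rewrite /P; ring.
  have a_le1 := simplex_le1 i a_simplex; have a_ge0 := ltW (a_gt0 i).
  have : 0 <= (d - P) * a i by apply: mulr_ge0; lra.
  have : 0 <= d * (1 - a i) by apply: mulr_ge0; rewrite /d; lra.
  lra.
have inv_gain : d < (4 * eta)^-1 * (sqsum t - sqsum t').
  have W_gt0 : 0 < (4 * eta)^-1 by rewrite invr_gt0 mulr_gt0.
  apply: (lt_le_trans _ (ler_wpM2l (ltW W_gt0) (sqsum_sub_ge i j0 t'_sq_le))).
  by rewrite ltr_pdivlMl ?mulr_gt0.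
have := dual_optimal_gain_le0 opt feas'; rewrite subrr mulr0 addr0; lra.
Qed.

End DualOptimal.

Lemma dual_feasible_trmx (R : realType) (n : nat) (C t : 'M[R]_n) (u v : 'I_n -> R) :
  dual_feasible C u v t -> dual_feasible C^T v u t^T.
Proof. by move=> feas i j; rewrite !mxE [v i + _]addrC; exact: feas. Qed.

Lemma dual_optimal_trmx (R : realType) (n : nat) (C : 'M[R]_n) (eta tau : R)
    (a b u v : 'I_n -> R) (t : 'M[R]_n) :
  dual_optimal C eta tau a b u v t -> dual_optimal C^T eta tau b a v u t^T.
Proof.
have objC u' v' t' : dual_obj eta tau b a v' u' t'^T = dual_obj eta tau a b u' v' t'.
  by rewrite !dual_objE sqsum_trmx; ring.
move=> [feas opt]; split; first exact: dual_feasible_trmx.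
move=> v' u' t' /dual_feasible_trmx; rewrite trmxK => feas'.
by rewrite -[t']trmxK !objC; exact: opt.
Qed.

Lemma mx_supnorm_ge (R : realType) (n : nat) (C : 'M[R]_n) i j :
  `|C i j| <= mx_supnorm C.
Proof.
by apply: le_trans (le_bigmax _ _ i); apply: le_trans (le_bigmax _ _ j).
Qed.

Theorem mainTheorem10 (R : realType) (n : nat) (C : 'M[R]_n) (tau eta : R)
  (a b : 'I_n -> R) (u v : 'I_n -> R) (t : 'M[R]_n) :
  (1 <= n)%N ->
  (forall i j, 0 <= C i j) ->
  0 < tau ->
  0 < eta ->
  in_simplex a -> in_simplex b ->
  (forall i, 0 < a i) -> (forall j, 0 < b j) ->
  dual_optimal C eta tau a b u v t ->
  forall i j, u i <= mx_supnorm C + 2 * eta /\ v j <= mx_supnorm C + 2 * eta.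
Proof.
move=> n_gt0 C_ge0 tau_gt0 eta_gt0 a_simplex b_simplex a_gt0 b_gt0 opt i j.
have C_le k l : C k l <= mx_supnorm C.
  by apply: le_trans (mx_supnorm_ge C k l); rewrite real_ler_norm ?realE ?C_ge0.
have M_ge0 : 0 <= mx_supnorm C by apply: le_trans (C_le i i).
have optT := dual_optimal_trmx opt.
have CT_ge0 k l : 0 <= C^T k l by rewrite mxE.
have CT_le k l : C^T k l <= mx_supnorm C by rewrite mxE.
have [j0 vj0_ge0] := exists_v_ge0 tau_gt0 n_gt0 C_ge0 a_simplex b_simplex a_gt0 opt.
have [i0 ui0_ge0] := exists_v_ge0 tau_gt0 n_gt0 CT_ge0 b_simplex a_simplex b_gt0 optT.
split.
- exact: u_le_bound C_le M_ge0 eta_gt0 a_simplex a_gt0 opt vj0_ge0 i.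
- exact: u_le_bound CT_le M_ge0 eta_gt0 b_simplex b_gt0 optT ui0_ge0 j.
Qed.
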